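(* Let $(a_k)_{k\geqslant1}$ be a sequence of complex numbers and $S(x)=\sum_{k\leqslant x}a_k\left[\frac{x}{k}\right]\log k$. Suppose that for every $v>1$, $\lim_{k\to\infty}|S(k)|/k^{v}=0$. Then the series $\sum_{m=1}^\infty a_m m^{-v}$ converges for every $v>1$.
   Context: $[x]$ denotes the integer part of a real number $x$. *)

From Stdlib Require Import Reals.
From Coquelicot Require Import Coquelicot.

(* The sequence (a_k)_{k>=1} is modelled by a : nat -> C; the value a 0 is
   never used. *)
Definition Ssum (a : nat -> C) (n : nat) : C :=
  sum_n_m (fun k => Cmult (a k) (RtoC (INR (Nat.div n k) * ln (INR k)))) 1 n.

From Stdlib Require Import Reals Lra Lia List Arith.
From Coquelicot Require Import Coquelicot.
Open Scope R_scope.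

(* Write B(y) = sum_{k <= y} a_k log k.  Counting multiples gives
   S(x) = sum_{l <= x} B(x/l).  Sieving the variable l by the primes p <= P,
   each prime replacing a sum Phi(x) by Phi(x) - Phi(x/p), leaves
   B(x) = Phi_P(x) - sum_{l > P, l free of prime factors <= P} B(x/l)
   with |Phi_P(x)| <= 2^P max_{y <= x} |S(y)|.  If S(x) = O(x^w) with w > 1,
   choosing P with sum_{l > P} l^-w <= 1/2 and inducting on x gives
   B(x) = O(x^w).  Abel summation of a_k k^-s = (a_k log k) (k^-s / log k)
   against B then gives convergence for every s > w; the complex case follows
   from the real and imaginary parts. *)

Lemma sum_n_m_le_loc (f g : nat -> R) n m :
  (forall k, (n <= k <= m)%nat -> f k <= g k) -> sum_n_m f n m <= sum_n_m g n m.
Proof.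
  induction m as [|m IH]; intros Hfg.
  - destruct n.
    + rewrite !sum_n_n. apply Hfg; lia.
    + rewrite !sum_n_m_zero by lia. apply Rle_refl.
  - destruct (Nat.le_gt_cases n (S m)).
    + rewrite !sum_n_Sm by lia.
      apply Rplus_le_compat; [apply IH; intros k Hk|]; apply Hfg; lia.
    + rewrite !sum_n_m_zero by lia. apply Rle_refl.
Qed.

Lemma sum_n_m_empty (f : nat -> R) n m : (m < n)%nat -> sum_n_m f n m = 0.
Proof. exact (sum_n_m_zero f n m). Qed.

Lemma sum_n_m_Rmult_l (c : R) (f : nat -> R) n m :
  sum_n_m (fun k => c * f k) n m = c * sum_n_m f n m.
Proof. exact (sum_n_m_mult_l (K := R_Ring) c f n m). Qed.

Lemma sum_n_m_Rplus (f g : nat -> R) n m :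
  sum_n_m (fun k => f k + g k) n m = sum_n_m f n m + sum_n_m g n m.
Proof. exact (sum_n_m_plus f g n m). Qed.

Lemma Rabs_sum_n_m_le (f : nat -> R) n m :
  Rabs (sum_n_m f n m) <= sum_n_m (fun k => Rabs (f k)) n m.
Proof. exact (norm_sum_n_m (V := R_NormedModule) f n m). Qed.

Lemma sum_n_m_swap {G : AbelianMonoid} (F : nat -> nat -> G) n m p q :
  sum_n_m (fun i => sum_n_m (fun j => F i j) p q) n m =
  sum_n_m (fun j => sum_n_m (fun i => F i j) n m) p q.
Proof.
  induction m as [|m IH].
  - destruct n.
    + rewrite sum_n_n. apply sum_n_m_ext. intros j. now rewrite sum_n_n.
    + rewrite sum_n_m_zero by lia. rewrite <- (sum_n_m_const_zero p q).
      apply sum_n_m_ext. intros j. now rewrite sum_n_m_zero by lia.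
  - destruct (Nat.le_gt_cases n (S m)).
    + rewrite sum_n_Sm, IH, <- sum_n_m_plus by lia.
      apply sum_n_m_ext. intros j. now rewrite sum_n_Sm by lia.
    + rewrite sum_n_m_zero by lia. rewrite <- (sum_n_m_const_zero p q).
      apply sum_n_m_ext. intros j. now rewrite sum_n_m_zero by lia.
Qed.

Lemma sum_n_m_indicator_le (f : nat -> R) m n : (m <= n)%nat ->
  sum_n_m (fun k => if (k <=? m)%nat then f k else 0) 1 n = sum_n_m f 1 m.
Proof.
  induction n as [|n IH]; intros Hmn.
  - replace m with 0%nat by lia. now rewrite !sum_n_m_zero by lia.
  - destruct (Nat.eq_dec m (S n)) as [->|Hm].
    + apply sum_n_m_ext_loc. intros k Hk.
      now destruct (Nat.leb_spec k (S n)); [|lia].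
    + rewrite sum_n_Sm, IH by lia.
      destruct (Nat.leb_spec (S n) m); [lia|]. apply Rplus_0_r.
Qed.

Lemma sum_n_m_indicator_gt (g : nat -> R) P n :
  sum_n_m (fun l => if (P <? l)%nat then g l else 0) 1 n = sum_n_m g (S P) n.
Proof.
  induction n as [|n IH].
  - now rewrite !sum_n_m_zero by lia.
  - rewrite sum_n_Sm, IH by lia.
    destruct (Nat.ltb_spec P (S n)).
    + now rewrite (sum_n_Sm g) by lia.
    + rewrite !sum_n_m_zero by lia. apply Rplus_0_r.
Qed.

Lemma div_succ_indicator n q : (1 <= q)%nat ->
  (S n / q = n / q + (if S n mod q =? 0 then 1 else 0))%nat.
Proof.
  intros Hq.
  pose proof (Nat.div_mod_eq (S n) q). pose proof (Nat.div_mod_eq n q).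
  pose proof (Nat.mod_upper_bound (S n) q ltac:(lia)).
  pose proof (Nat.mod_upper_bound n q ltac:(lia)).
  destruct (Nat.eqb_spec (S n mod q) 0); nia.
Qed.

Lemma sum_n_m_multiples (G : nat -> R) q n : (1 <= q)%nat ->
  sum_n_m (fun m => G (q * m)%nat) 1 (n / q) =
  sum_n_m (fun l => if (l mod q =? 0)%nat then G l else 0) 1 n.
Proof.
  intros Hq. induction n as [|n IH].
  - now rewrite Nat.Div0.div_0_l, !sum_n_m_zero by lia.
  - rewrite sum_n_Sm, <- IH by lia. rewrite div_succ_indicator by lia.
    destruct (Nat.eqb_spec (S n mod q) 0) as [E|E].
    + rewrite Nat.add_1_r, sum_n_Sm by lia. do 2 f_equal.
      pose proof (Nat.div_mod_eq (S n) q) as Hdm. rewrite E in Hdm.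
      rewrite div_succ_indicator, E in Hdm by lia. simpl in Hdm. lia.
    + rewrite Nat.add_0_r. symmetry. apply Rplus_0_r.
Qed.

Lemma le_div_iff_mul_le k l n : (1 <= k)%nat -> (l <=? n / k)%nat = (l * k <=? n)%nat.
Proof.
  intros Hk. apply Bool.eq_true_iff_eq. rewrite !Nat.leb_le. split; intros H.
  - pose proof (Nat.Div0.mul_div_le n k). nia.
  - apply Nat.div_le_lower_bound; lia.
Qed.

Lemma div_le_self n l : (n / l <= n)%nat.
Proof. destruct l; [apply Nat.le_0_l|]. apply Nat.Div0.div_le_upper_bound. nia. Qed.

Definition psum (b : nat -> R) (n : nat) : R := sum_n_m b 1 n.

Lemma INR_div_as_sum k n : (1 <= k)%nat ->
  INR (n / k) = sum_n_m (fun l => if (l <=? n / k)%nat then 1 else 0) 1 n.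
Proof.
  intros Hk. rewrite sum_n_m_indicator_le by apply div_le_self.
  rewrite sum_n_m_const, Rmult_1_r. f_equal. lia.
Qed.

Lemma sum_floor_eq_sum_psum (b : nat -> R) n :
  sum_n_m (fun k => b k * INR (n / k)) 1 n = sum_n_m (fun l => psum b (n / l)) 1 n.
Proof.
  transitivity (sum_n_m (fun k => sum_n_m
                  (fun l => if (l * k <=? n)%nat then b k else 0) 1 n) 1 n).
  { apply sum_n_m_ext_loc. intros k Hk. rewrite INR_div_as_sum by lia.
    rewrite <- sum_n_m_Rmult_l. apply sum_n_m_ext. intros l.
    rewrite le_div_iff_mul_le by lia. destruct (l * k <=? n)%nat; cbn; ring. }
  rewrite sum_n_m_swap. apply sum_n_m_ext_loc. intros l Hl.
  unfold psum. rewrite <- (sum_n_m_indicator_le b (n / l) n) by apply div_le_self.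
  apply sum_n_m_ext_loc. intros k Hk.
  now rewrite le_div_iff_mul_le, Nat.mul_comm by lia.
Qed.

(* [rough q (S q)] holds exactly when [S q] is prime. *)
Definition rough (q l : nat) : bool :=
  forallb (fun d => negb (l mod d =? 0)%nat) (seq 2 (pred q)).

Lemma roughP q l : rough q l = true <-> forall d, (2 <= d <= q)%nat -> ~ Nat.divide d l.
Proof.
  unfold rough. rewrite forallb_forall. split.
  - intros H d Hd Hdl. apply Nat.Lcm0.mod_divide in Hdl.
    specialize (H d ltac:(rewrite in_seq; lia)). now rewrite Hdl in H.
  - intros H d Hd. rewrite in_seq in Hd. apply Bool.negb_true_iff, Nat.eqb_neq.
    intros E. apply (H d); [lia|]. now apply Nat.Lcm0.mod_divide.
Qed.

Lemma rough_1_r q : rough q 1 = true.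
Proof.
  apply roughP. intros d Hd Hd1. apply Nat.divide_1_r in Hd1. lia.
Qed.

Lemma rough_small q l : (2 <= l <= q)%nat -> rough q l = false.
Proof.
  intros Hl. apply Bool.not_true_iff_false. rewrite roughP.
  intros H. exact (H l Hl (Nat.divide_refl l)).
Qed.

Lemma rough_succ q l : (1 <= q)%nat ->
  rough (S q) l = (rough q l && negb (l mod S q =? 0))%bool.
Proof.
  intros Hq. unfold rough. replace (pred (S q)) with (S (pred q)) by lia.
  rewrite seq_S, forallb_app. replace (2 + pred q)%nat with (S q) by lia.
  cbn [forallb]. now rewrite Bool.andb_true_r.
Qed.

Lemma rough_succ_composite q l : (1 <= q)%nat -> rough q (S q) = false ->
  rough (S q) l = rough q l.
Proof.
  intros Hq Hcomp. rewrite rough_succ by exact Hq.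
  destruct (rough q l) eqn:Hl; [|reflexivity].
  destruct (Nat.eqb_spec (l mod S q) 0) as [Hdiv|]; [|reflexivity].
  apply Nat.Lcm0.mod_divide in Hdiv. rewrite roughP in Hl.
  enough (rough q (S q) = true) by congruence.
  apply roughP. intros d Hd Hdq. apply (Hl d Hd). now apply (Nat.divide_trans d (S q)).
Qed.

Lemma rough_mul_prime q m : rough q (S q) = true ->
  rough q (S q * m) = rough q m.
Proof.
  intros Hprime. rewrite roughP in Hprime.
  apply Bool.eq_true_iff_eq. rewrite !roughP.
  split; intros H d Hd Hdiv; apply (H d Hd).
  - now apply Nat.divide_mul_r.
  - apply (Nat.gauss d (S q) m Hdiv).
    pose proof (Nat.gcd_divide_l d (S q)) as Hgd.
    pose proof (Nat.gcd_divide_r d (S q)) as Hgq.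
    assert (Nat.gcd d (S q) <> 0%nat) by (intros E; apply Nat.gcd_eq_0 in E; lia).
    pose proof (Nat.divide_pos_le _ d ltac:(lia) Hgd).
    destruct (Nat.eq_dec (Nat.gcd d (S q)) 1) as [|Hg]; [assumption|].
    exfalso. exact (Hprime (Nat.gcd d (S q)) ltac:(lia) Hgq).
Qed.

Definition sieve (b : nat -> R) (q n : nat) : R :=
  sum_n_m (fun l => if rough q l then psum b (n / l) else 0) 1 n.

Lemma sieve_1 b n : sieve b 1 n = sum_n_m (fun l => psum b (n / l)) 1 n.
Proof. reflexivity. Qed.

Lemma sieve_succ_composite b q n : (1 <= q)%nat -> rough q (S q) = false ->
  sieve b (S q) n = sieve b q n.
Proof.
  intros Hq Hcomp. apply sum_n_m_ext. intros l.
  now rewrite rough_succ_composite.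
Qed.

Lemma sieve_succ_prime b q n : (1 <= q)%nat -> rough q (S q) = true ->
  sieve b (S q) n = sieve b q n - sieve b q (n / S q).
Proof.
  intros Hq Hprime.
  set (G := fun l => if rough q l then psum b (n / l) else 0).
  assert (Hmult : sieve b q (n / S q) =
                  sum_n_m (fun l => if (l mod S q =? 0)%nat then G l else 0) 1 n).
  { rewrite <- sum_n_m_multiples by lia. apply sum_n_m_ext. intros m.
    unfold G. now rewrite rough_mul_prime, Nat.Div0.div_div by exact Hprime. }
  rewrite Hmult.
  enough (H : sieve b q n = sieve b (S q) n
                 + sum_n_m (fun l => if (l mod S q =? 0)%nat then G l else 0) 1 n) by lra.
  unfold sieve. rewrite <- sum_n_m_Rplus. apply sum_n_m_ext. intros l.
  unfold G. rewrite rough_succ by exact Hq.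
  destruct (rough q l), (l mod S q =? 0)%nat; cbn; ring.
Qed.

Lemma sieve_bound b M n : (forall x, (x <= n)%nat -> Rabs (sieve b 1 x) <= M) ->
  forall q x, (1 <= q)%nat -> (x <= n)%nat -> Rabs (sieve b q x) <= 2 ^ q * M.
Proof.
  intros HM q. induction q as [|q IH]; intros x Hq Hx; [lia|].
  assert (HM0 : 0 <= M) by (apply Rle_trans with (2 := HM 0%nat (Nat.le_0_l n)); apply Rabs_pos).
  assert (H2q : 0 <= 2 ^ q * M) by (apply Rmult_le_pos; [apply pow_le; lra | exact HM0]).
  destruct q as [|q].
  - specialize (HM x Hx). rewrite pow_1. lra.
  - change (2 ^ S (S q)) with (2 * 2 ^ S q).
    destruct (rough (S q) (S (S q))) eqn:Hprime.
    + rewrite sieve_succ_prime by (lia || exact Hprime).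
      assert (Hn : (x / S (S q) <= n)%nat) by (eapply Nat.le_trans; [apply div_le_self | exact Hx]).
      pose proof (IH x ltac:(lia) Hx). pose proof (IH (x / S (S q))%nat ltac:(lia) Hn).
      pose proof (Rabs_triang (sieve b (S q) x) (- sieve b (S q) (x / S (S q)))) as Htri.
      rewrite Rabs_Ropp in Htri. unfold Rminus. lra.
    + rewrite sieve_succ_composite by (lia || exact Hprime).
      pose proof (IH x ltac:(lia) Hx). lra.
Qed.

Lemma psum_le_sieve_add_tail b P n : (1 <= P)%nat -> (1 <= n)%nat ->
  Rabs (psum b n) <= Rabs (sieve b P n)
    + sum_n_m (fun l => if (P <? l)%nat then Rabs (psum b (n / l)) else 0) 1 n.
Proof.
  intros HP Hn. unfold sieve.
  rewrite !(sum_Sn_m _ 1 n) by exact Hn. change (@plus R_AbelianMonoid) with Rplus.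
  rewrite rough_1_r, Nat.div_1_r.
  destruct (Nat.ltb_spec P 1); [lia|].
  set (T := sum_n_m _ 2 n).
  assert (HT : Rabs T <= sum_n_m (fun l => if (P <? l)%nat then Rabs (psum b (n / l)) else 0) 2 n).
  { eapply Rle_trans; [apply Rabs_sum_n_m_le|]. apply sum_n_m_le_loc. intros l Hl.
    destruct (Nat.ltb_spec P l).
    - destruct (rough P l); [apply Rle_refl | rewrite Rabs_R0; apply Rabs_pos].
    - rewrite rough_small, Rabs_R0 by lia. apply Rle_refl. }
  pose proof (Rabs_triang (psum b n + T) (- T)) as Htri.
  rewrite Rabs_Ropp in Htri. replace (psum b n + T + - T) with (psum b n) in Htri by ring.
  lra.
Qed.

Lemma Rpower_pos x y : 0 < Rpower x y.
Proof. apply exp_pos. Qed.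

Lemma Rle_Rpower_l_opp a b c : 0 <= c -> 0 < a <= b -> Rpower b (- c) <= Rpower a (- c).
Proof.
  intros Hc Hab. rewrite !Rpower_Ropp.
  apply Rinv_le_contravar; [apply Rpower_pos | now apply Rle_Rpower_l].
Qed.

Lemma Rpower_opp_diff_bounds d x : 0 < d -> 0 < x ->
  d * Rpower (x + 1) (- (1 + d)) <= Rpower x (- d) - Rpower (x + 1) (- d)
                                 <= d * Rpower x (- (1 + d)).
Proof.
  intros Hd Hx.
  destruct (MVT_cor2 (fun y => Rpower y (- d)) (fun y => - d * Rpower y (- d - 1)) x (x + 1))
    as [c [Hmvt Hc]]; [lra| |].
  { intros c Hc. apply derivable_pt_lim_power. lra. }
  replace (- (1 + d)) with (- d - 1) by ring.
  replace (Rpower x (- d) - Rpower (x + 1) (- d)) with (d * Rpower c (- d - 1)) by lra.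
  replace (- d - 1) with (- (d + 1)) by ring.
  pose proof (Rle_Rpower_l_opp x c (d + 1) ltac:(lra) ltac:(lra)).
  pose proof (Rle_Rpower_l_opp c (x + 1) (d + 1) ltac:(lra) ltac:(lra)).
  split; apply Rmult_le_compat_l; lra.
Qed.

Lemma is_lim_seq_Rpower_opp d : 0 < d -> is_lim_seq (fun k => Rpower (INR (S k)) (- d)) 0.
Proof.
  intros Hd. unfold Rpower.
  apply (is_lim_comp_seq exp _ m_infty 0 is_lim_exp_m); [now exists 0%nat|].
  replace m_infty with (Rbar_mult (- d) p_infty)
    by (cbn; case Rle_dec; intros; [exfalso; lra | reflexivity]).
  apply is_lim_seq_scal_l.
  apply (is_lim_comp_seq ln _ p_infty p_infty is_lim_ln_p); [now exists 0%nat|].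
  apply (is_lim_seq_incr_1 INR), is_lim_seq_INR.
Qed.

Lemma is_lim_seq_scal_0 (u : nat -> R) c : is_lim_seq u 0 -> is_lim_seq (fun n => c * u n) 0.
Proof. intros Hu. rewrite <- (Rbar_mult_0_r c). now apply is_lim_seq_scal_l. Qed.

Lemma ex_series_telescoping (h : nat -> R) (l : R) :
  is_lim_seq h l -> ex_series (fun k => h k - h (S k)).
Proof.
  intros Hl. exists (h O - l).
  apply (is_lim_seq_ext (fun N => h O - h (S N)) _ (h O - l)).
  { induction n as [|n IH]; [now rewrite sum_O|].
    rewrite sum_Sn, <- IH. cbn. ring. }
  apply is_lim_seq_minus'; [apply is_lim_seq_const | now apply (is_lim_seq_incr_1 h)].
Qed.

Lemma ex_series_Rpower_opp d : 0 < d -> ex_series (fun k => Rpower (INR (S k)) (- (1 + d))).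
Proof.
  intros Hd. apply ex_series_incr_1.
  apply (@ex_series_le R_AbsRing R_CompleteNormedModule _
           (fun k => / d * Rpower (INR (S k)) (- d) - / d * Rpower (INR (S (S k))) (- d))).
  - intros k. change norm with Rabs. rewrite Rabs_pos_eq by (left; apply Rpower_pos).
    assert (Hk : 0 < INR (S k)) by apply lt_0_INR, Nat.lt_0_succ.
    pose proof (proj1 (Rpower_opp_diff_bounds d _ Hd Hk)) as Hlow.
    rewrite <- S_INR in Hlow.
    apply Rmult_le_reg_l with d; [exact Hd|].
    replace (d * (/ d * Rpower (INR (S k)) (- d) - / d * Rpower (INR (S (S k))) (- d)))
      with (Rpower (INR (S k)) (- d) - Rpower (INR (S (S k))) (- d)) by (field; lra).
    exact Hlow.
  - apply (ex_series_telescoping (fun k => / d * Rpower (INR (S k)) (- d)) 0).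
    apply is_lim_seq_scal_0, is_lim_seq_Rpower_opp, Hd.
Qed.

Lemma Rpower_tail_le_half w : 1 < w -> exists P, (1 <= P)%nat /\
  forall n, sum_n_m (fun l => if (P <? l)%nat then Rpower (INR l) (- w) else 0) 1 n <= / 2.
Proof.
  intros Hw.
  pose proof (Cauchy_ex_series _ (ex_series_Rpower_opp (w - 1) ltac:(lra))) as Hcauchy.
  replace (1 + (w - 1)) with w in Hcauchy by ring.
  destruct (Hcauchy (mkposreal (/ 2) ltac:(lra))) as [N HN].
  exists (S N). split; [lia|]. intros n. rewrite sum_n_m_indicator_gt.
  destruct (Nat.le_gt_cases (S (S N)) n).
  - destruct n as [|n]; [lia|].
    rewrite <- sum_n_m_S. specialize (HN (S N) n ltac:(lia) ltac:(lia)).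
    exact (Rlt_le _ _ (Rle_lt_trans _ _ _ (Rle_abs _) HN)).
  - rewrite sum_n_m_empty by lia. lra.
Qed.

Lemma Rpower_INR_div_le n l w : (1 <= l)%nat -> (1 <= n / l)%nat -> 0 <= w ->
  Rpower (INR (n / l)) w <= Rpower (INR n) w * Rpower (INR l) (- w).
Proof.
  intros Hl Hnl Hw.
  assert (Hl0 : 0 < INR l) by (apply lt_0_INR; lia).
  assert (Hn0 : 0 < INR n) by (apply lt_0_INR; pose proof (div_le_self n l); lia).
  apply Rle_trans with (Rpower (INR n / INR l) w).
  - apply Rle_Rpower_l; [exact Hw|]. split; [apply lt_0_INR; lia|].
    apply Rmult_le_reg_r with (INR l); [exact Hl0|].
    unfold Rdiv. rewrite Rmult_assoc, Rinv_l, Rmult_1_r by lra.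
    rewrite <- mult_INR. apply le_INR. rewrite Nat.mul_comm. apply Nat.Div0.mul_div_le.
  - right. unfold Rpower. rewrite ln_div, <- exp_plus by assumption. f_equal. ring.
Qed.

Lemma psum_bound_of_floor_sum_bound (b : nat -> R) w M : 1 < w -> 0 <= M ->
  (forall x, (1 <= x)%nat ->
     Rabs (sum_n_m (fun k => b k * INR (x / k)) 1 x) <= M * Rpower (INR x) w) ->
  exists K, forall n, (1 <= n)%nat -> Rabs (psum b n) <= K * Rpower (INR n) w.
Proof.
  intros Hw HM Hfloor.
  destruct (Rpower_tail_le_half w Hw) as [P [HP Htail]].
  set (K := 2 * 2 ^ P * M).
  assert (HK : 0 <= K) by (unfold K; pose proof (pow_le 2 P); nra).
  exists K. intros n. induction n as [n IH] using lt_wf_ind. intros Hn.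
  pose proof (Rpower_pos (INR n) w) as Hnw.
  assert (Hsieve : Rabs (sieve b P n) <= 2 ^ P * (M * Rpower (INR n) w)).
  { apply (sieve_bound b _ n); [|exact HP | apply Nat.le_refl]. intros x Hx.
    rewrite sieve_1, <- sum_floor_eq_sum_psum. destruct x as [|x].
    - rewrite sum_n_m_empty, Rabs_R0 by lia. nra.
    - eapply Rle_trans; [apply Hfloor; lia|]. apply Rmult_le_compat_l; [exact HM|].
      apply Rle_Rpower_l; [lra|]. split; [apply lt_0_INR; lia | apply le_INR, Hx]. }
  assert (Htail_n : sum_n_m (fun l => if (P <? l)%nat then Rabs (psum b (n / l)) else 0) 1 n
                    <= K * Rpower (INR n) w * / 2).
  { eapply Rle_trans; [|apply Rmult_le_compat_l; [nra | apply (Htail n)]].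
    rewrite <- sum_n_m_Rmult_l. apply sum_n_m_le_loc. intros l Hl.
    destruct (Nat.ltb_spec P l); [|rewrite Rmult_0_r; apply Rle_refl].
    pose proof (Rpower_pos (INR l) (- w)).
    destruct (Nat.eq_dec (n / l) 0) as [Hz|Hz].
    - rewrite Hz. unfold psum. rewrite sum_n_m_empty, Rabs_R0 by lia.
      apply Rmult_le_pos; [nra | lra].
    - eapply Rle_trans; [apply IH; [apply Nat.div_lt; lia | lia]|].
      rewrite Rmult_assoc. apply Rmult_le_compat_l; [exact HK|].
      apply Rpower_INR_div_le; lia || lra. }
  pose proof (psum_le_sieve_add_tail b P n HP Hn).
  assert (2 ^ P * (M * Rpower (INR n) w) = K * Rpower (INR n) w * / 2) by (unfold K; field).
  lra.
Qed.

Lemma psum_by_parts (c f : nat -> R) N :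
  psum (fun k => c k * f k) N =
  psum c N * f (S N) + sum_n_m (fun k => psum c k * (f k - f (S k))) 1 N.
Proof.
  unfold psum. induction N as [|N IH].
  - rewrite !sum_n_m_empty by lia. ring.
  - rewrite !sum_n_Sm, IH by lia. cbn -[sum_n_m]. ring.
Qed.

Lemma ex_series_by_parts (c f : nat -> R) :
  is_lim_seq (fun n => psum c n * f (S n)) 0 ->
  ex_series (fun n => psum c (S n) * (f (S n) - f (S (S n)))) ->
  ex_series (fun n => c (S n) * f (S n)).
Proof.
  intros Hlim [L HL]. exists (0 + L).
  apply (is_lim_seq_ext
           (fun N => psum c (S N) * f (S (S N))
                     + sum_n (fun n => psum c (S n) * (f (S n) - f (S (S n)))) N) _ (0 + L)).
  { intros N. unfold sum_n.
    rewrite (sum_n_m_S (fun k => c k * f k)),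
            (sum_n_m_S (fun k => psum c k * (f k - f (S k)))).
    symmetry. apply psum_by_parts. }
  apply is_lim_seq_plus'; [|exact HL].
  exact (proj1 (is_lim_seq_incr_1 (fun n => psum c n * f (S n)) 0) Hlim).
Qed.

Lemma ln_2_pos : 0 < ln 2.
Proof. rewrite <- ln_1. apply ln_increasing; lra. Qed.

Definition log_weight (s x : R) : R := Rpower x (- s) / ln x.

Lemma mul_ln_mul_log_weight u s x : 1 < x -> u * ln x * log_weight s x = u * Rpower x (- s).
Proof.
  intros Hx. unfold log_weight.
  assert (0 < ln x) by (rewrite <- ln_1; apply ln_increasing; lra).
  field. lra.
Qed.

Lemma ln_succ_sub_le x : 0 < x -> ln (x + 1) - ln x <= / x.
Proof.
  intros Hx. rewrite <- ln_div by lra.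
  replace ((x + 1) / x) with (1 + / x) by (field; lra).
  rewrite <- (ln_exp (/ x)) at 2.
  apply ln_le; [pose proof (Rinv_0_lt_compat x Hx); lra | apply exp_ineq1_le].
Qed.

Lemma log_weight_diff_le s x : 0 < s -> 2 <= x ->
  Rabs (log_weight s x - log_weight s (x + 1))
    <= (s / ln 2 + / (ln 2 * ln 2)) * Rpower x (- (1 + s)).
Proof.
  intros Hs Hx. unfold log_weight.
  pose proof ln_2_pos as Hl2.
  assert (Hlx : ln 2 <= ln x) by (apply ln_le; lra).
  assert (Hly : ln x <= ln (x + 1)) by (apply ln_le; lra).
  pose proof (ln_succ_sub_le x ltac:(lra)) as Hdl.
  pose proof (Rpower_opp_diff_bounds s x Hs ltac:(lra)) as [Hlow Hup].
  pose proof (Rpower_pos (x + 1) (- (1 + s))).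
  pose proof (Rpower_pos (x + 1) (- s)).
  set (p := Rpower x (- s)) in *. set (q := Rpower (x + 1) (- s)) in *.
  assert (Hr : Rpower x (- (1 + s)) = p * / x).
  { unfold p. replace (- (1 + s)) with (- s + - (1)) by ring.
    now rewrite Rpower_plus, (Rpower_Ropp x 1), Rpower_1 by lra. }
  rewrite Hr in Hup |- *.
  set (lx := ln x) in *. set (ly := ln (x + 1)) in *.
  (* x^-s / ln x is a product of two decreasing factors; split its decrement accordingly *)
  replace (p / lx - q / ly) with ((p - q) / lx + q * (ly - lx) / (lx * ly)) by (field; lra).
  assert (Hpq : 0 <= p - q) by nra.
  assert (A1 : 0 <= (p - q) / lx <= s * (p * / x) / ln 2).
  { split; [apply Rdiv_le_0_compat; lra|].
    unfold Rdiv. apply Rmult_le_compat; try lra.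
    - left. apply Rinv_0_lt_compat. lra.
    - apply Rinv_le_contravar; lra. }
  assert (A2 : 0 <= q * (ly - lx) / (lx * ly) <= p * / x / (ln 2 * ln 2)).
  { split; [apply Rdiv_le_0_compat; [apply Rmult_le_pos|apply Rmult_lt_0_compat]; lra|].
    unfold Rdiv. apply Rmult_le_compat.
    - apply Rmult_le_pos; lra.
    - left. apply Rinv_0_lt_compat, Rmult_lt_0_compat; lra.
    - apply Rmult_le_compat; lra.
    - apply Rinv_le_contravar; [nra | apply Rmult_le_compat; lra]. }
  rewrite Rabs_pos_eq by lra.
  replace ((s / ln 2 + / (ln 2 * ln 2)) * (p * / x))
    with (s * (p * / x) / ln 2 + p * / x / (ln 2 * ln 2)) by (field; lra).
  lra.
Qed.

Lemma INR_SS_ge_2 k : 2 <= INR (S (S k)).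
Proof. rewrite !S_INR. pose proof (pos_INR k). lra. Qed.

Section RealSeries.

Variables (a : nat -> R) (K w s : R).
Hypotheses (Hs : 0 < s) (Hws : w < s).
Let b k := a k * ln (INR k).
Let f k := log_weight s (INR k).
Hypothesis Hpsum : forall n, (1 <= n)%nat -> Rabs (psum b n) <= K * Rpower (INR n) w.

Lemma psum_mul_Rpower_le n e :
  Rabs (psum b (S n)) * Rpower (INR (S n)) (- e) <= K * Rpower (INR (S n)) (- (e - w)).
Proof.
  pose proof (Rpower_pos (INR (S n)) (- e)).
  eapply Rle_trans; [apply Rmult_le_compat_r; [lra | apply Hpsum; lia]|].
  rewrite Rmult_assoc, <- Rpower_plus. right. do 2 f_equal. ring.
Qed.

Lemma is_lim_seq_psum_log_weight : is_lim_seq (fun n => psum b n * f (S n)) 0.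
Proof.
  apply is_lim_seq_incr_1, is_lim_seq_abs_0.
  pose proof ln_2_pos as Hl2.
  apply (is_lim_seq_le_le (fun _ => 0) _ (fun n => / ln 2 * (K * Rpower (INR (S n)) (- (s - w))))).
  - intros n. split; [apply Rabs_pos|].
    pose proof (INR_SS_ge_2 n) as H2.
    assert (Hln : ln 2 <= ln (INR (S (S n)))) by (apply ln_le; lra).
    pose proof (Rpower_pos (INR (S (S n))) (- s)).
    assert (Hf : Rabs (f (S (S n))) <= / ln 2 * Rpower (INR (S n)) (- s)).
    { unfold f, log_weight. rewrite Rabs_pos_eq by (apply Rdiv_le_0_compat; lra).
      unfold Rdiv. rewrite Rmult_comm. apply Rmult_le_compat.
      - left. apply Rinv_0_lt_compat. lra.
      - lra.
      - apply Rinv_le_contravar; lra.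
      - apply Rle_Rpower_l_opp; [lra|]. rewrite (S_INR (S n)).
        pose proof (lt_0_INR (S n) (Nat.lt_0_succ n)). lra. }
    rewrite Rabs_mult. eapply Rle_trans.
    + apply Rmult_le_compat_l; [apply Rabs_pos | exact Hf].
    + rewrite Rmult_comm, Rmult_assoc. apply Rmult_le_compat_l.
      * left. apply Rinv_0_lt_compat. lra.
      * rewrite Rmult_comm. apply psum_mul_Rpower_le.
  - apply is_lim_seq_const.
  - apply is_lim_seq_scal_0, is_lim_seq_scal_0, is_lim_seq_Rpower_opp. lra.
Qed.

Lemma ex_series_psum_log_weight_diff :
  ex_series (fun n => psum b (S n) * (f (S n) - f (S (S n)))).
Proof.
  set (c := s / ln 2 + / (ln 2 * ln 2)).
  assert (Hc : 0 <= c).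
  { pose proof ln_2_pos. unfold c.
    assert (0 < / (ln 2 * ln 2)) by (apply Rinv_0_lt_compat; nra).
    assert (0 < s / ln 2) by (apply Rdiv_lt_0_compat; lra). lra. }
  apply ex_series_incr_1.
  apply (@ex_series_le R_AbsRing R_CompleteNormedModule _
           (fun n => c * (K * Rpower (INR (S (S n))) (- (1 + (s - w)))))).
  - intros n. change norm with Rabs. rewrite Rabs_mult.
    pose proof (INR_SS_ge_2 n) as H2.
    pose proof (log_weight_diff_le s _ Hs H2) as Hdiff.
    rewrite <- S_INR in Hdiff. fold c in Hdiff.
    eapply Rle_trans; [apply Rmult_le_compat_l; [apply Rabs_pos | exact Hdiff]|].
    rewrite (Rmult_comm c (Rpower _ _)), <- Rmult_assoc, (Rmult_comm c).
    apply Rmult_le_compat_r; [exact Hc|].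
    replace (- (1 + (s - w))) with (- ((1 + s) - w)) by ring.
    apply psum_mul_Rpower_le.
  - apply (ex_series_scal_l (K := R_AbsRing) c (fun n => K * Rpower (INR (S (S n))) (- (1 + (s - w))))).
    apply (ex_series_scal_l (K := R_AbsRing) K (fun n => Rpower (INR (S (S n))) (- (1 + (s - w))))).
    apply (ex_series_incr_1 (fun n => Rpower (INR (S n)) (- (1 + (s - w))))).
    apply ex_series_Rpower_opp. lra.
Qed.

Lemma ex_series_of_psum_bound : ex_series (fun m => a (S m) * Rpower (INR (S m)) (- s)).
Proof.
  (* [b 1 = 0] since [ln 1 = 0], so the first term has to be split off *)
  apply ex_series_incr_1.
  apply (ex_series_ext (fun m => b (S (S m)) * f (S (S m)))).
  { intros m. apply mul_ln_mul_log_weight. pose proof (INR_SS_ge_2 m). lra. }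
  apply (ex_series_incr_1 (fun m => b (S m) * f (S m))).
  apply ex_series_by_parts.
  - exact is_lim_seq_psum_log_weight.
  - exact ex_series_psum_log_weight_diff.
Qed.

End RealSeries.

Lemma ex_series_of_floor_sum_bound (a : nat -> R) w M s : 1 < w -> w < s -> 0 <= M ->
  (forall x, (1 <= x)%nat ->
     Rabs (sum_n_m (fun k => a k * ln (INR k) * INR (x / k)) 1 x) <= M * Rpower (INR x) w) ->
  ex_series (fun m => a (S m) * Rpower (INR (S m)) (- s)).
Proof.
  intros Hw Hws HM Hfloor.
  destruct (psum_bound_of_floor_sum_bound _ w M Hw HM Hfloor) as [K HK].
  exact (ex_series_of_psum_bound a K w s ltac:(lra) Hws HK).
Qed.

Lemma sum_n_m_proj (p : C -> R) (u : nat -> C) n m :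
  (forall x y : C, p (Cplus x y) = p x + p y) -> p (RtoC 0) = 0 ->
  p (sum_n_m u n m) = sum_n_m (fun k => p (u k)) n m.
Proof.
  intros Hadd H0. induction m as [|m IH].
  - destruct n; [now rewrite !sum_n_n|]. now rewrite !sum_n_m_zero by lia.
  - destruct (Nat.le_gt_cases n (S m)).
    + rewrite !sum_n_Sm by lia. cbn [plus]. rewrite <- IH. apply Hadd.
    + now rewrite !sum_n_m_zero by lia.
Qed.

Lemma Re_Ssum a n :
  Re (Ssum a n) = sum_n_m (fun k => Re (a k) * ln (INR k) * INR (n / k)) 1 n.
Proof.
  unfold Ssum. rewrite sum_n_m_proj; [| reflexivity | reflexivity].
  apply sum_n_m_ext. intros k. destruct (a k) as [x y]. cbn. ring.
Qed.

Lemma Im_Ssum a n :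
  Im (Ssum a n) = sum_n_m (fun k => Im (a k) * ln (INR k) * INR (n / k)) 1 n.
Proof.
  unfold Ssum. rewrite sum_n_m_proj; [| reflexivity | reflexivity].
  apply sum_n_m_ext. intros k. destruct (a k) as [x y]. cbn. ring.
Qed.

Lemma ex_series_C (u : nat -> C) :
  ex_series (fun n => Re (u n)) -> ex_series (fun n => Im (u n)) -> ex_series u.
Proof.
  intros [lx Hx] [ly Hy]. exists (lx, ly). intros P [eps HP].
  destruct (Hx _ (locally_ball lx eps)) as [N1 H1].
  destruct (Hy _ (locally_ball ly eps)) as [N2 H2].
  exists (Nat.max N1 N2). intros n Hn. apply HP. split.
  - change (ball lx eps (Re (sum_n u n))).
    unfold sum_n. rewrite sum_n_m_proj by reflexivity. apply H1. lia.
  - change (ball ly eps (Im (sum_n u n))).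
    unfold sum_n. rewrite sum_n_m_proj by reflexivity. apply H2. lia.
Qed.

Lemma is_lim_seq_bounded_above (u : nat -> R) (l : R) :
  is_lim_seq u l -> exists M, 0 <= M /\ forall n, u n <= M.
Proof.
  intros Hu. apply is_lim_seq_spec in Hu.
  destruct (Hu (mkposreal 1 Rlt_0_1)) as [N HN].
  assert (Hinit : exists M, 0 <= M /\ forall n, (n < N)%nat -> u n <= M).
  { clear HN. induction N as [|N [M [HM HMu]]].
    - exists 0. split; [lra | intros; lia].
    - exists (Rmax M (u N)). split; [apply Rle_trans with M; [exact HM | apply Rmax_l]|].
      intros n Hn. destruct (Nat.eq_dec n N) as [->|]; [apply Rmax_r|].
      apply Rle_trans with M; [apply HMu; lia | apply Rmax_l]. }
  destruct Hinit as [M [HM HMu]].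
  exists (Rmax M (Rabs l + 1)). split; [apply Rle_trans with M; [exact HM | apply Rmax_l]|].
  intros n. destruct (Nat.lt_ge_cases n N) as [HnN|HnN].
  - apply Rle_trans with M; [apply HMu; lia | apply Rmax_l].
  - specialize (HN n HnN). cbn in HN. apply Rle_trans with (Rabs l + 1); [|apply Rmax_r].
    pose proof (Rle_abs l). pose proof (Rle_abs (u n - l)). lra.
Qed.

Theorem lemma2 (a : nat -> C) :
  (forall v : R, 1 < v ->
     is_lim_seq (fun k : nat => Cmod (Ssum a k) / Rpower (INR k) v) 0) ->
  forall v : R, 1 < v ->
    ex_series (fun m : nat => Cmult (a (S m)) (RtoC (Rpower (INR (S m)) (- v)))).
Proof.
  intros Hlim s Hs.
  set (w := (1 + s) / 2).
  destruct (is_lim_seq_bounded_above _ _ (Hlim w ltac:(unfold w; lra))) as [M [HM HMb]].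
  assert (HS : forall x, (1 <= x)%nat -> Cmod (Ssum a x) <= M * Rpower (INR x) w).
  { intros x Hx. specialize (HMb x). pose proof (Rpower_pos (INR x) w).
    apply Rmult_le_compat_r with (r := Rpower (INR x) w) in HMb; [|lra].
    unfold Rdiv in HMb. rewrite Rmult_assoc, Rinv_l, Rmult_1_r in HMb by lra. exact HMb. }
  apply ex_series_C.
  - apply (ex_series_ext (fun m => Re (a (S m)) * Rpower (INR (S m)) (- s))).
    { intros m. destruct (a (S m)). cbn. ring. }
    apply (ex_series_of_floor_sum_bound (fun k => Re (a k)) w M); try (unfold w; lra).
    intros x Hx. rewrite <- Re_Ssum.
    exact (Rle_trans _ _ _ (re_le_Cmod _) (HS x Hx)).
  - apply (ex_series_ext (fun m => Im (a (S m)) * Rpower (INR (S m)) (- s))).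
    { intros m. destruct (a (S m)). cbn. ring. }
    apply (ex_series_of_floor_sum_bound (fun k => Im (a k)) w M); try (unfold w; lra).
    intros x Hx. rewrite <- Im_Ssum.
    exact (Rle_trans _ _ _ (Rle_trans _ _ _ (Rmax_r _ _) (Rmax_Cmod _)) (HS x Hx)).
Qed.
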